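(* Let $A$ be a Cayley--Dickson algebra over a field $F$ and $f(x)\in A[x]$. If $\lambda\in A\setminus F$ is a spherical root of $f(x)$, then $\lambda$ is a root of the companion polynomial $C_f(x)$.
   Context: For an $F$-algebra $B$ with involution and $\gamma\in F^\times$, the Cayley--Dickson double $B\{\gamma\}$ is $B\times B$ with componentwise linear operations, product $(a,b)(c,d)=(ac+\gamma\bar d b,\ da+b\bar c)$ and involution $\overline{(a,b)}=(\bar a,-b)$. Cayley--Dickson algebras over $F$: $A_1=F[\ell_1:\ell_1^2=\ell_1+\mu]$ with $\mu\in F$, $4\mu+1\neq0$, involution $\overline{\alpha+\beta\ell_1}=(\alpha+\beta)-\beta\ell_1$, and $A_{k+1}=A_k\{\gamma_k\}$, $\gamma_k\in F^\times$; $F$ is identified with $F\cdot1$. Trace $\mathrm{tr}(\lambda)=\lambda+\bar\lambda\in F$, norm $\mathrm{n}(\lambda)=\bar\lambda\lambda\in F$, characteristic polynomial $p_\lambda(x)=x^2-\mathrm{tr}(\lambda)x+\mathrm{n}(\lambda)\in F[x]$. The polynomial ring $A[x]=A\otimes_F F[x]$ has central indeterminate $x$; $f(x)=a_mx^m+\dots+a_0$ with $a_k\in A$, products via $(ax^i)(bx^j)=(ab)x^{i+j}$, substitution $f(r)=\sum_k a_k(r^k)$. The involution extends by $\overline{f(x)}=\bar a_mx^m+\dots+\bar a_0$, and the companion polynomial is $C_f(x)=\overline{f(x)}\cdot f(x)$, which lies in $F[x]$ (it is the norm of $f$ in the Cayley--Dickson algebra $A\otimes_F F(x)$). A root $\lambda\in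 A\setminus F$ of $f$ is a spherical root if every $r\in A$ with $p_\lambda(r)=0$ is also a root of $f$. *)

From HB Require Import structures.
From mathcomp Require Import all_boot all_order all_algebra.
Set Implicit Arguments. Unset Strict Implicit. Unset Printing Implicit Defensive.
Import GRing.Theory.
Local Open Scope ring_scope.

(* Carrier of A_{n+1}: cdT F 0 = A_1 = F[l] (pairs (a,b) = a + b l),
   cdT F (k+1) = cdT F k x cdT F k  (the Cayley--Dickson double). *)
Fixpoint cdT (F : Type) (n : nat) : Type :=
  match n with
  | 0 => (F * F)%type
  | k.+1 => (cdT F k * cdT F k)%type
  end.

Section CD.
Variable F : fieldType.
Variable mu : F.          (* l_1^2 = l_1 + mu *)
Variable gam : nat -> F.  (* gam k is the doubling parameter used for cdT F k.+1 *)

Fixpoint cd_zero (n : nat) : cdT F n :=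
  match n return cdT F n with
  | 0 => (0, 0)
  | k.+1 => (cd_zero k, cd_zero k)
  end.

Fixpoint cd_scal (n : nat) (c : F) : cdT F n :=
  match n return cdT F n with
  | 0 => (c, 0)
  | k.+1 => (cd_scal k c, cd_zero k)
  end.

Definition cd_one (n : nat) : cdT F n := cd_scal n 1.

Fixpoint cd_add (n : nat) : cdT F n -> cdT F n -> cdT F n :=
  match n return cdT F n -> cdT F n -> cdT F n with
  | 0 => fun x y => (x.1 + y.1, x.2 + y.2)
  | k.+1 => fun x y => (cd_add x.1 y.1, cd_add x.2 y.2)
  end.

Fixpoint cd_opp (n : nat) : cdT F n -> cdT F n :=
  match n return cdT F n -> cdT F n with
  | 0 => fun x => (- x.1, - x.2)
  | k.+1 => fun x => (cd_opp x.1, cd_opp x.2)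
  end.

Fixpoint cd_scale (n : nat) (c : F) : cdT F n -> cdT F n :=
  match n return cdT F n -> cdT F n with
  | 0 => fun x => (c * x.1, c * x.2)
  | k.+1 => fun x => (cd_scale c x.1, cd_scale c x.2)
  end.

(* involution: on A_1, conj(a + b l) = (a + b) - b l; on a double, conj(a,b) = (conj a, -b) *)
Fixpoint cd_conj (n : nat) : cdT F n -> cdT F n :=
  match n return cdT F n -> cdT F n with
  | 0 => fun x => (x.1 + x.2, - x.2)
  | k.+1 => fun x => (cd_conj x.1, cd_opp x.2)
  end.

(* product: on A_1, (a + b l)(c + d l) = (ac + mu bd) + (ad + bc + bd) l;
   on a double, (a,b)(c,d) = (ac + gam * conj(d) b, d a + b conj(c)) *)
Fixpoint cd_mul (n : nat) : cdT F n -> cdT F n -> cdT F n :=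
  match n return cdT F n -> cdT F n -> cdT F n with
  | 0 => fun x y => (x.1 * y.1 + mu * (x.2 * y.2),
                     x.1 * y.2 + x.2 * y.1 + x.2 * y.2)
  | k.+1 => fun x y =>
      (cd_add (cd_mul x.1 y.1) (cd_scale (gam k) (cd_mul (cd_conj y.2) x.2)),
       cd_add (cd_mul y.2 x.1) (cd_mul x.2 (cd_conj y.1)))
  end.

Definition cd_sub (n : nat) (x y : cdT F n) : cdT F n := cd_add x (cd_opp y).

(* r^k := r * r^(k-1), r^0 = 1 (CD algebras are power-associative) *)
Fixpoint cd_pow (n : nat) (r : cdT F n) (k : nat) : cdT F n :=
  match k with
  | 0 => cd_one n
  | k'.+1 => cd_mul r (cd_pow r k')
  end.

Definition cd_sum (n : nat) (s : seq (cdT F n)) : cdT F n :=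
  foldr (@cd_add n) (cd_zero n) s.

(* Polynomials in A[x] (central indeterminate) are coefficient lists
   [:: a_0; a_1; ...; a_m].  Substitution f(r) = sum_k a_k (r^k). *)
Definition cd_eval (n : nat) (f : seq (cdT F n)) (r : cdT F n) : cdT F n :=
  cd_sum [seq cd_mul (nth (cd_zero n) f k) (cd_pow r k) | k <- iota 0 (size f)].

Definition cd_root (n : nat) (f : seq (cdT F n)) (r : cdT F n) : Prop :=
  cd_eval f r = cd_zero n.

Definition cd_pconj (n : nat) (f : seq (cdT F n)) : seq (cdT F n) :=
  [seq cd_conj a | a <- f].

Definition cd_pmul (n : nat) (p q : seq (cdT F n)) : seq (cdT F n) :=
  [seq cd_sum [seq cd_mul (nth (cd_zero n) p i) (nth (cd_zero n) q (k - i))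
              | i <- iota 0 k.+1]
  | k <- iota 0 (size p + size q).-1].

Definition companion (n : nat) (f : seq (cdT F n)) : seq (cdT F n) :=
  cd_pmul (cd_pconj f) f.

Definition cd_tr (n : nat) (l : cdT F n) : cdT F n := cd_add l (cd_conj l).
Definition cd_norm (n : nat) (l : cdT F n) : cdT F n := cd_mul (cd_conj l) l.

Definition charpoly_cd (n : nat) (l : cdT F n) : seq (cdT F n) :=
  [:: cd_norm l; cd_opp (cd_tr l); cd_one n].

Definition in_F (n : nat) (l : cdT F n) : Prop := exists c : F, l = cd_scal n c.

Definition spherical_root (n : nat) (f : seq (cdT F n)) (l : cdT F n) : Prop :=
  ~ in_F l /\ cd_root f l /\
  (forall r : cdT F n, cd_root (charpoly_cd l) r -> cd_root f r).

End CD.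

(* Every r in A satisfies r^2 = tr(r) r - n(r), so r^k = alpha_k + beta_k r with
   alpha_k, beta_k in F depending only on tr(r) and n(r).  Hence on the sphere S of
   elements having the trace and norm of lam, f(r) = B + A r for fixed B, A in A.
   The elements of S are roots of p_lam, so f vanishes on S and A r = A lam for all
   r in S; an induction along the Cayley--Dickson doubling, using 4 mu + 1 <> 0 and
   gam_k <> 0, shows that this forces A = 0, and then B = f(lam) = 0.  Thus f is
   zero modulo p_lam, hence so is every x^i f, and evaluating
   C_f = sum_i conj(f_i) x^i f at lam gives 0. *)

From HB Require Import structures.
From mathcomp Require Import all_boot all_order all_algebra.
From mathcomp Require Import boolp ring zify.
Import GRing.Theory.
Local Open Scope ring_scope.

Lemma sum_nat_triangle {V : zmodType} (h : nat -> nat -> V) K :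
  \sum_(0 <= k < K) \sum_(0 <= i < k.+1) h i (k - i)%N =
  \sum_(0 <= i < K) \sum_(0 <= j < K - i) h i j.
Proof.
elim: K => [|K IH]; first by rewrite !big_geq.
rewrite big_nat_recr //= IH.
have -> : \sum_(0 <= i < K.+1) \sum_(0 <= j < K.+1 - i) h i j =
          \sum_(0 <= i < K.+1) (\sum_(0 <= j < K - i) h i j + h i (K - i)%N).
  by apply: eq_big_nat => i /andP[_ hi]; rewrite subSn // big_nat_recr.
rewrite big_split /= [X in _ = X + _]big_nat_recr //= subnn.
by rewrite [\sum_(0 <= j < 0) h K j]big_geq // addr0.
Qed.

Lemma sum_nat_trunc {V : zmodType} (g : nat -> V) m M :
  (m <= M)%N -> (forall j, (m <= j)%N -> g j = 0) ->
  \sum_(0 <= j < M) g j = \sum_(0 <= j < m) g j.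
Proof.
move=> hmM g0; rewrite (@big_cat_nat _ _ _ m 0 M _ _ (leq0n m) hmM) /=.
rewrite [X in _ + X]big1_seq ?addr0 //.
by move=> j /andP[_]; rewrite mem_index_iota => /andP[/g0].
Qed.

Section Vector.
Set Implicit Arguments. Unset Strict Implicit.
Variable F : fieldType.

Lemma cd_addA n (x y z : cdT F n) : cd_add x (cd_add y z) = cd_add (cd_add x y) z.
Proof.
by elim: n x y z => [|k IH] [x1 x2] [y1 y2] [z1 z2] /=; [congr pair; ring | rewrite !IH].
Qed.

Lemma cd_addC n (x y : cdT F n) : cd_add x y = cd_add y x.
Proof.
by elim: n x y => [|k IH] [x1 x2] [y1 y2] /=; [congr pair; ring | rewrite IH (IH x2)].
Qed.

Lemma cd_add0 n (x : cdT F n) : cd_add (cd_zero F n) x = x.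
Proof.
by elim: n x => [|k IH] [x1 x2] /=; [congr pair; ring | rewrite !IH].
Qed.

Lemma cd_addN n (x : cdT F n) : cd_add (cd_opp x) x = cd_zero F n.
Proof.
by elim: n x => [|k IH] [x1 x2] /=; [congr pair; ring | rewrite !IH].
Qed.

Lemma cd_scaleA n a b (x : cdT F n) : cd_scale a (cd_scale b x) = cd_scale (a * b) x.
Proof.
by elim: n x => [|k IH] [x1 x2] /=; [congr pair; ring | rewrite !IH].
Qed.

Lemma cd_scale1 n (x : cdT F n) : cd_scale 1 x = x.
Proof.
by elim: n x => [|k IH] [x1 x2] /=; [congr pair; ring | rewrite !IH].
Qed.

Lemma cd_scaleDr n a (x y : cdT F n) :
  cd_scale a (cd_add x y) = cd_add (cd_scale a x) (cd_scale a y).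
Proof.
by elim: n x y => [|k IH] [x1 x2] [y1 y2] /=; [congr pair; ring | rewrite !IH].
Qed.

Lemma cd_scaleDl n a b (x : cdT F n) :
  cd_scale (a + b) x = cd_add (cd_scale a x) (cd_scale b x).
Proof.
by elim: n x => [|k IH] [x1 x2] /=; [congr pair; ring | rewrite !IH].
Qed.

HB.instance Definition _ n := gen_eqMixin (cdT F n).
HB.instance Definition _ n := gen_choiceMixin (cdT F n).
HB.instance Definition _ n :=
  GRing.isZmodule.Build (cdT F n) (@cd_addA n) (@cd_addC n) (@cd_add0 n) (@cd_addN n).
HB.instance Definition _ n :=
  GRing.Zmodule_isLmodule.Build F (cdT F n) (@cd_scaleA n) (@cd_scale1 n)
    (@cd_scaleDr n) (fun x a b => @cd_scaleDl n a b x).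

Lemma cd_addE n (x y : cdT F n) : cd_add x y = x + y. Proof. by []. Qed.
Lemma cd_oppE n (x : cdT F n) : cd_opp x = - x. Proof. by []. Qed.
Lemma cd_scaleE n a (x : cdT F n) : cd_scale a x = a *: x. Proof. by []. Qed.
Lemma cd_zeroE n : cd_zero F n = 0. Proof. by []. Qed.
Definition cdE := (cd_addE, cd_oppE, cd_scaleE, cd_zeroE).

End Vector.

(* [cd_add], [cd_opp], [cd_scale], [cd_zero] are the vector operations in disguise:
   expose them to compute one doubling step, then fold the results back. *)
Ltac cdsimp := rewrite -?cdE /= ?cdE.

Section Algebra.
Set Implicit Arguments. Unset Strict Implicit.
Variables (F : fieldType) (mu : F) (gam : nat -> F).
Local Notation mul := (cd_mul mu gam).
Local Notation one n := (cd_one F n).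

Lemma conjZD n a (x y : cdT F n) : cd_conj (a *: x + y) = a *: cd_conj x + cd_conj y.
Proof.
elim: n x y => [|k IH] [x1 x2] [y1 y2]; cdsimp; first by congr pair; ring.
by rewrite IH scalerN opprD.
Qed.

Lemma conjD n (x y : cdT F n) : cd_conj (x + y) = cd_conj x + cd_conj y.
Proof. by have := conjZD 1 x y; rewrite !scale1r. Qed.

Lemma conj0 n : cd_conj (0 : cdT F n) = 0.
Proof. by apply: (addrI (cd_conj (0 : cdT F n))); rewrite -conjD !addr0. Qed.

Lemma conjZ n a (x : cdT F n) : cd_conj (a *: x) = a *: cd_conj x.
Proof. by rewrite -[a *: x]addr0 conjZD conj0 addr0. Qed.

Lemma conjN n (x : cdT F n) : cd_conj (- x) = - cd_conj x.
Proof. by rewrite -scaleN1r conjZ scaleN1r. Qed.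

Lemma conjK n (x : cdT F n) : cd_conj (cd_conj x) = x.
Proof.
elim: n x => [|k IH] [x1 x2]; cdsimp; first by congr pair; ring.
by rewrite IH opprK.
Qed.

Lemma cd_mul_linear n :
  (forall a (x y z : cdT F n), mul (a *: x + y) z = a *: mul x z + mul y z) /\
  (forall a (x y z : cdT F n), mul z (a *: x + y) = a *: mul z x + mul z y).
Proof.
elim: n => [|k [IHl IHr]]; split=> a [x1 x2] [y1 y2] [z1 z2]; cdsimp.
- by congr pair; ring.
- by congr pair; ring.
- rewrite IHl IHr IHr IHl; congr pair; last by rewrite scalerDr addrACA.
  by rewrite !scalerDr !scalerA [a * _]mulrC addrACA.
- rewrite IHl conjZD IHl IHr conjZD IHr; congr pair; last by rewrite scalerDr addrACA.
  by rewrite !scalerDr !scalerA [a * _]mulrC addrACA.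
Qed.

Lemma cd_mulDl n (x y z : cdT F n) : mul (x + y) z = mul x z + mul y z.
Proof. by have := (cd_mul_linear n).1 1 x y z; rewrite !scale1r. Qed.

Lemma cd_mulDr n (x y z : cdT F n) : mul z (x + y) = mul z x + mul z y.
Proof. by have := (cd_mul_linear n).2 1 x y z; rewrite !scale1r. Qed.

Lemma cd_mul0l n (z : cdT F n) : mul 0 z = 0.
Proof. by apply: (addrI (mul 0 z)); rewrite -cd_mulDl !addr0. Qed.

Lemma cd_mul0r n (z : cdT F n) : mul z 0 = 0.
Proof. by apply: (addrI (mul z 0)); rewrite -cd_mulDr !addr0. Qed.

Lemma cd_mulZl n a (x z : cdT F n) : mul (a *: x) z = a *: mul x z.
Proof. by have := (cd_mul_linear n).1 a x 0 z; rewrite !addr0 cd_mul0l addr0. Qed.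

Lemma cd_mulZr n a (x z : cdT F n) : mul z (a *: x) = a *: mul z x.
Proof. by have := (cd_mul_linear n).2 a x 0 z; rewrite !addr0 cd_mul0r addr0. Qed.

Lemma cd_mulNl n (x z : cdT F n) : mul (- x) z = - mul x z.
Proof. by rewrite -scaleN1r cd_mulZl scaleN1r. Qed.

Lemma cd_mulNr n (x z : cdT F n) : mul z (- x) = - mul z x.
Proof. by rewrite -scaleN1r cd_mulZr scaleN1r. Qed.

Lemma cd_mulBl n (x y z : cdT F n) : mul (x - y) z = mul x z - mul y z.
Proof. by rewrite cd_mulDl cd_mulNl. Qed.

Lemma cd_mul_suml n I (s : seq I) (P : pred I) (g : I -> cdT F n) r :
  mul (\sum_(i <- s | P i) g i) r = \sum_(i <- s | P i) mul (g i) r.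
Proof. by apply: (big_morph (fun x => mul x r)) => [x y|]; rewrite ?cd_mulDl ?cd_mul0l. Qed.

Lemma cd_mul_sumr n I (s : seq I) (P : pred I) (g : I -> cdT F n) r :
  mul r (\sum_(i <- s | P i) g i) = \sum_(i <- s | P i) mul r (g i).
Proof. by apply: (big_morph (fun x => mul r x)) => [x y|]; rewrite ?cd_mulDr ?cd_mul0r. Qed.

Lemma cd_scalE n c : cd_scal n c = c *: one n.
Proof.
rewrite /cd_one; elim: n => [|k IH]; cdsimp; first by congr pair; ring.
by rewrite IH scaler0.
Qed.

Lemma conj_one n : cd_conj (one n) = one n.
Proof.
rewrite /cd_one; elim: n => [|k IH]; cdsimp; first by congr pair; ring.
by rewrite IH oppr0.
Qed.

Lemma cd_mul1 n :
  (forall x : cdT F n, mul (one n) x = x) /\ (forall x : cdT F n, mul x (one n) = x).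
Proof.
rewrite /cd_one; elim: n => [|k [IHl IHr]]; split=> -[x1 x2]; cdsimp; try by congr pair; ring.
all: rewrite ?conj0 ?cd_mul0r ?cd_mul0l ?scaler0 ?addr0 ?add0r -/(cd_one F k).
all: by rewrite ?conj_one ?IHl ?IHr.
Qed.

Lemma cd_mul1r n (x : cdT F n) : mul (one n) x = x. Proof. exact: (cd_mul1 n).1. Qed.
Lemma cd_mulr1 n (x : cdT F n) : mul x (one n) = x. Proof. exact: (cd_mul1 n).2. Qed.

Lemma conj_mul n (x y : cdT F n) : cd_conj (mul x y) = mul (cd_conj y) (cd_conj x).
Proof.
elim: n x y => [|k IH] [x1 x2] [y1 y2]; cdsimp; first by congr pair; ring.
rewrite conjD conjZ !IH !conjK !conjN !cd_mulNl !cd_mulNr opprK opprD.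
by congr pair; rewrite addrC.
Qed.

(* F-valued trace and norm: [cd_tr x = trF x *: 1] and [cd_norm x = nF x *: 1]. *)
Fixpoint trF n : cdT F n -> F :=
  match n return cdT F n -> F with
  | 0 => fun x => x.1 *+ 2 + x.2
  | k.+1 => fun x => trF x.1
  end.

Fixpoint nF n : cdT F n -> F :=
  match n return cdT F n -> F with
  | 0 => fun x => x.1 ^+ 2 + x.1 * x.2 - mu * x.2 ^+ 2
  | k.+1 => fun x => nF x.1 - gam k * nF x.2
  end.

Lemma conj_trF n (x : cdT F n) : cd_conj x = trF x *: one n - x.
Proof.
rewrite /cd_one; elim: n x => [|k IH] [x1 x2]; cdsimp; first by congr pair; ring.
by rewrite IH scaler0 add0r.
Qed.

Lemma cd_mul_conj n (x : cdT F n) :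
  mul (cd_conj x) x = nF x *: one n /\ mul x (cd_conj x) = nF x *: one n.
Proof.
rewrite /cd_one; elim: n x => [|k IH] [x1 x2]; cdsimp; first by split; congr pair; ring.
rewrite !conjN !cd_mulNl !cd_mulNr conjK (IH x1).1 (IH x1).2 (IH x2).1 scaler0 -/(cd_one F k).
by split; congr pair; rewrite ?subrr ?addNr // scalerBl scalerN scalerA.
Qed.

Lemma cd_mul_self n (x : cdT F n) : mul x x = trF x *: x - nF x *: one n.
Proof.
have {1}-> : x = trF x *: one n - cd_conj x by rewrite conj_trF opprB addrC subrK.
by rewrite cd_mulBl cd_mulZl cd_mul1r (cd_mul_conj x).1.
Qed.

Lemma trF_conj n (x : cdT F n) : trF (cd_conj x) = trF x.
Proof. by elim: n x => [|k IH] [x1 x2] /=; [rewrite -?cdE /=; ring | exact: IH]. Qed.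

Lemma nF0 n : nF (0 : cdT F n) = 0.
Proof. by elim: n => [|k IH]; cdsimp; [ring | rewrite IH mulr0 subr0]. Qed.

Lemma nF_opp n (x : cdT F n) : nF (- x) = nF x.
Proof. by elim: n x => [|k IH] [x1 x2]; cdsimp; [ring | rewrite !IH]. Qed.

Lemma nF_conj n (x : cdT F n) : nF (cd_conj x) = nF x.
Proof. by elim: n x => [|k IH] [x1 x2]; cdsimp; [ring | rewrite IH nF_opp]. Qed.

Lemma trF_scal n c : trF (cd_scal n c) = c *+ 2.
Proof. by elim: n => [|k IH] /=; [rewrite addr0 | exact: IH]. Qed.

Lemma nF_scal n c : nF (cd_scal n c) = c ^+ 2.
Proof.
elim: n => [|k IH] /=; first by rewrite mulr0 expr0n /= mulr0 !subr0 addr0.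
by rewrite IH -/(0 : cdT F k) nF0 mulr0 subr0.
Qed.

Lemma notin_F_conj n (l : cdT F n) : ~ in_F l -> ~ in_F (cd_conj l).
Proof.
move=> nl [c hc]; apply: nl; exists c.
by rewrite -[l]conjK hc !cd_scalE conjZ conj_one.
Qed.

Fixpoint embed1 n (u : cdT F 0) : cdT F n :=
  match n return cdT F n with
  | 0 => u
  | k.+1 => (embed1 k u, cd_zero F k)
  end.

Lemma trF_embed1 n u : trF (embed1 n u) = trF u.
Proof. by elim: n. Qed.

Lemma nF_embed1 n u : nF (embed1 n u) = nF u.
Proof. by elim: n => [|k IH] //=; rewrite IH nF0 mulr0 subr0. Qed.

Lemma embed1_notin_F n (u : cdT F 0) : u.2 != 0 -> ~ in_F (embed1 n u).
Proof.
move=> u2 [c]; elim: n c => [|k IH] c /=; last by case=> /IH.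
by case: u u2 => u1 u2 /= u2n [_ e]; rewrite e eqxx in u2n.
Qed.

Definition sphere n (l r : cdT F n) : Prop := trF r = trF l /\ nF r = nF l.

Lemma sphere_trans n (l r0 r : cdT F n) : sphere l r0 -> sphere r0 r -> sphere l r.
Proof. by move=> [t0 n0] [t1 n1]; split; [rewrite t1 | rewrite n1]. Qed.

Lemma sphere_conjP n (l r : cdT F n) : sphere (cd_conj l) r <-> sphere l (cd_conj r).
Proof. by rewrite /sphere !trF_conj !nF_conj. Qed.

Lemma sphere_conj n (l : cdT F n) : sphere l (cd_conj l).
Proof. by rewrite /sphere trF_conj nF_conj. Qed.

Lemma sphere_pair1 k (l1 l2 r1 : cdT F k) :
  sphere l1 r1 -> sphere ((l1, l2) : cdT F k.+1) (r1, l2).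
Proof. by move=> [t1 n1]; split; rewrite /= ?t1 ?n1. Qed.

Lemma sphere_pair2 k (l1 l2 r2 : cdT F k) :
  sphere l2 r2 -> sphere ((l1, l2) : cdT F k.+1) (l1, r2).
Proof. by move=> [_ n2]; split; rewrite /= ?n2. Qed.

Definition sphere_lfaithful n := forall l a : cdT F n, ~ in_F l ->
  (forall r, sphere l r -> mul a r = mul a l) -> a = 0.

Definition sphere_rfaithful n := forall l a : cdT F n, ~ in_F l ->
  (forall r, sphere l r -> mul r a = mul l a) -> a = 0.

Lemma sphere_rfaithful_of_l n : sphere_lfaithful n -> sphere_rfaithful n.
Proof.
move=> Kl l a nl H; rewrite -[a]conjK.
suff -> : cd_conj a = 0 by rewrite conj0.
apply: (Kl _ _ (notin_F_conj nl)) => r /sphere_conjP /H e.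
by rewrite -[r]conjK -!conj_mul e.
Qed.

(* In A_1 = F[ell], [l - conj l = l.2 (2 ell - 1)] and [(2 ell - 1)^2 = 4 mu + 1],
   so [a (l - conj l) = 0] forces [a = 0]. *)
Lemma sphere_lfaithful0 : 4 * mu + 1 != 0 -> sphere_lfaithful 0.
Proof.
move=> hmu [l1 l2] [a1 a2] nl /(_ _ (sphere_conj _)); cdsimp; case=> e1 e2.
have l2n : l2 != 0 by apply/eqP => l20; apply: nl; exists l1; rewrite l20.
have E1 : (a1 - 2 * mu * a2) * l2 = 0.
  by apply: etrans (subrr (a1 * l1 + mu * (a2 * l2))); rewrite -{1}e1; ring.
have E2 : (2 * a1 + a2) * l2 = 0.
  by apply: etrans (subrr (a1 * l2 + a2 * l1 + a2 * l2)); rewrite -{2}e2; ring.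
have a1E : a1 * ((4 * mu + 1) * l2) = 2 * mu * ((2 * a1 + a2) * l2) + (a1 - 2 * mu * a2) * l2.
  by ring.
have a2E : a2 * ((4 * mu + 1) * l2) = (2 * a1 + a2) * l2 - 2 * ((a1 - 2 * mu * a2) * l2).
  by ring.
have hl : (4 * mu + 1) * l2 != 0 by rewrite mulf_neq0.
rewrite E1 E2 mulr0 addr0 in a1E; rewrite E1 E2 mulr0 subr0 in a2E.
move/eqP: a1E; rewrite mulf_eq0 (negbTE hl) orbF => /eqP->.
by move/eqP: a2E; rewrite mulf_eq0 (negbTE hl) orbF => /eqP->.
Qed.

Lemma sphere_lfaithful_pair1 k (Kl : sphere_lfaithful k) (l a : cdT F k.+1) :
  ~ in_F l.1 -> (forall r, sphere l r -> mul a r = mul a l) -> a = 0.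
Proof.
case: l a => l1 l2 [a1 a2] nl1 H.
have H1 r : sphere l1 r -> mul a1 r = mul a1 l1 /\ mul a2 (cd_conj r) = mul a2 (cd_conj l1).
  move/(sphere_pair1 l2)/H; cdsimp; case=> e1 e2.
  by split; [exact: addIr e1 | exact: addrI e2].
have -> : a1 = 0 :> cdT F k by apply: (Kl _ _ nl1) => r /H1[].
have -> : a2 = 0 :> cdT F k.
  by apply: (Kl _ _ (notin_F_conj nl1)) => r /sphere_conjP /H1[_]; rewrite conjK.
by [].
Qed.

Lemma sphere_lfaithful_pair2 k (hk : gam k != 0) (Kr : sphere_rfaithful k)
    (l a : cdT F k.+1) :
  ~ in_F l.2 -> (forall r, sphere l r -> mul a r = mul a l) -> a = 0.
Proof.
case: l a => l1 l2 [a1 a2] nl2 H.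
have H2 r : sphere l2 r -> mul r a1 = mul l2 a1 /\ mul (cd_conj r) a2 = mul (cd_conj l2) a2.
  move/(sphere_pair2 l1)/H; cdsimp; case=> e1 e2; split; first exact: addIr e2.
  exact: (scalerI hk (addrI _ e1)).
have -> : a1 = 0 :> cdT F k by apply: (Kr _ _ nl2) => r /H2[].
have -> : a2 = 0 :> cdT F k.
  by apply: (Kr _ _ (notin_F_conj nl2)) => r /sphere_conjP /H2[_]; rewrite conjK.
by [].
Qed.

(* When [mu = 0] the norm form [x^2 + x y] of A_1 may take the value [c^2] only at
   scalars (e.g. over GF(2)), so the witness also moves the first component. *)
Lemma sphere_scal_pair k (b c : F) : gam k != 0 -> c != 0 ->
  exists2 r : cdT F k.+1, sphere ((cd_scal k b, cd_scal k c) : cdT F k.+1) r & ~ in_F r.2.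
Proof.
move=> hk hc; have [mu0 | mun0] := eqVneq mu 0.
  exists (embed1 k (b - gam k * c, 2 * gam k * c), embed1 k (c, - (gam k * c))).
    by split; rewrite /= ?trF_embed1 ?nF_embed1 ?trF_scal ?nF_scal /= ?mu0; ring.
  by rewrite /=; apply: embed1_notin_F; rewrite /= oppr_eq0 mulf_neq0.
exists (cd_scal k b, embed1 k (c, c / mu)).
  by split; rewrite //= nF_embed1 !nF_scal /=; congr (_ - _ * _); field.
by rewrite /=; apply: embed1_notin_F; rewrite /= mulf_neq0 ?invr_eq0.
Qed.

Lemma cd_sphere_lfaithful n :
  4 * mu + 1 != 0 -> (forall k, (k < n)%N -> gam k != 0) -> sphere_lfaithful n.
Proof.
elim: n => [|k IH] hmu hg; first exact: sphere_lfaithful0.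
have Kl : sphere_lfaithful k := IH hmu (fun j hj => hg j (ltnW hj)).
have Kr := sphere_rfaithful_of_l Kl.
have hk := hg k (ltnSn k).
move=> [l1 l2] a nl H.
have [[b hb] | nl1] := pselect (in_F l1).
  2: exact: (sphere_lfaithful_pair1 (l := (l1, l2)) Kl nl1 H).
have [[c hc] | nl2] := pselect (in_F l2).
  2: exact: (sphere_lfaithful_pair2 (l := (l1, l2)) hk Kr nl2 H).
have c0 : c != 0.
  by apply/eqP => c0; apply: nl; exists b; rewrite hb hc c0 [cd_scal k 0]cd_scalE scale0r.
have [r0 r0l nr0] := sphere_scal_pair b hk c0; rewrite -hb -hc in r0l.
apply: (sphere_lfaithful_pair2 hk Kr nr0) => r r0r.
by rewrite !H //; exact: sphere_trans r0l r0r.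
Qed.

(* The coordinates of x^k in F[x]/(x^2 - t x + N) on the basis 1, x. *)
Fixpoint quad_pow (t N : F) k : F * F :=
  if k is k'.+1 then
    (- (N * (quad_pow t N k').2), (quad_pow t N k').1 + t * (quad_pow t N k').2)
  else (1, 0).

Lemma quad_powD t N i j :
  (quad_pow t N (i + j)).1 =
    (quad_pow t N i).1 * (quad_pow t N j).1 - N * (quad_pow t N i).2 * (quad_pow t N j).2 /\
  (quad_pow t N (i + j)).2 =
    (quad_pow t N i).1 * (quad_pow t N j).2 + (quad_pow t N i).2 * (quad_pow t N j).1
    + t * (quad_pow t N i).2 * (quad_pow t N j).2.
Proof.
elim: i => [|i [IH1 IH2]]; first by rewrite add0n /=; split; ring.
by rewrite addSn /= IH1 IH2; split; ring.
Qed.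

Lemma cd_pow_quad n (r : cdT F n) k :
  cd_pow mu gam r k =
  (quad_pow (trF r) (nF r) k).1 *: one n + (quad_pow (trF r) (nF r) k).2 *: r.
Proof.
elim: k => [|k IH] /=; first by rewrite scale1r scale0r addr0.
rewrite IH cd_mulDr !cd_mulZr cd_mulr1 cd_mul_self.
set al := (quad_pow _ _ k).1; set be := (quad_pow _ _ k).2.
rewrite scalerBr !scalerA scalerDl scaleNr [nF r * _]mulrC [trF r * be]mulrC.
by rewrite addrA addrC.
Qed.

Definition wsum n (w : nat -> F) (f : seq (cdT F n)) : cdT F n :=
  \sum_(0 <= k < size f) w k *: f`_k.

Lemma cd_sumE n (s : seq (cdT F n)) : cd_sum s = \sum_(x <- s) x.
Proof. by elim: s => [|x s IH]; rewrite ?big_nil ?big_cons //= -IH. Qed.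

Lemma cd_eval_quad n (f : seq (cdT F n)) r :
  cd_eval mu gam f r =
  wsum (fun k => (quad_pow (trF r) (nF r) k).1) f
  + mul (wsum (fun k => (quad_pow (trF r) (nF r) k).2) f) r.
Proof.
rewrite /cd_eval cd_sumE big_map /wsum cd_mul_suml -big_split /index_iota subn0.
apply: eq_bigr => k _.
by rewrite cd_pow_quad cd_mulDr !cd_mulZr cd_mulr1 cd_mulZl.
Qed.

Lemma nth_pconj n (f : seq (cdT F n)) i : (cd_pconj f)`_i = cd_conj f`_i.
Proof.
rewrite /cd_pconj; case: (ltnP i (size f)) => hi; first by rewrite (nth_map 0).
by rewrite !nth_default ?size_map // conj0.
Qed.

Lemma wsum_companion n w (f : seq (cdT F n)) :
  wsum w (companion mu gam f) =
  \sum_(0 <= i < size f) mul (cd_conj f`_i) (wsum (fun j => w (i + j)%N) f).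
Proof.
set m := size f; set K := (m + m).-1.
have sizeC : size (companion mu gam f) = K.
  by rewrite /companion /cd_pmul size_map size_iota size_map.
have coefC k : (k < K)%N ->
    (companion mu gam f)`_k = \sum_(0 <= i < k.+1) mul (cd_conj f`_i) f`_(k - i).
  move=> hk; rewrite /companion /cd_pmul (nth_map 0%N) ?size_iota ?size_map //.
  rewrite nth_iota // add0n cd_sumE big_map /index_iota subn0.
  by apply: eq_bigr => i _; rewrite nth_pconj.
pose h i j := w (i + j)%N *: mul (cd_conj f`_i) f`_j.
rewrite /wsum sizeC.
transitivity (\sum_(0 <= k < K) \sum_(0 <= i < k.+1) h i (k - i)%N).
  apply: eq_big_nat => k /andP[_ hk]; rewrite coefC // scaler_sumr.
  by apply: eq_big_nat => i /andP[_ hi]; rewrite /h subnKC.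
rewrite sum_nat_triangle (sum_nat_trunc _ m).
- apply: eq_big_nat => i /andP[_ hi]; rewrite cd_mul_sumr (sum_nat_trunc _ m).
  + by apply: eq_bigr => j _; rewrite /h cd_mulZr.
  + by rewrite /K; lia.
  + by move=> j hj; rewrite /h [f`_j]nth_default // cd_mul0r scaler0.
- by rewrite /K; lia.
- by move=> i hi; rewrite big1 // => j _; rewrite /h nth_default // conj0 cd_mul0l scaler0.
Qed.

Lemma wsum_quad_shift n t N (f : seq (cdT F n)) i :
  wsum (fun k => (quad_pow t N k).1) f = 0 -> wsum (fun k => (quad_pow t N k).2) f = 0 ->
  wsum (fun j => (quad_pow t N (i + j)).1) f = 0 /\
  wsum (fun j => (quad_pow t N (i + j)).2) f = 0.
Proof.
rewrite /wsum => hB hA; split.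
- under eq_bigr => j _ do rewrite (quad_powD t N i j).1 scalerBl -!scalerA.
  by rewrite sumrB -!scaler_sumr hB hA !scaler0 subr0.
- under eq_bigr => j _ do rewrite (quad_powD t N i j).2 !scalerDl -!scalerA.
  by rewrite !big_split -!scaler_sumr /= hB hA !scaler0 !addr0.
Qed.

Lemma cd_root_companion n (f : seq (cdT F n)) l :
  wsum (fun k => (quad_pow (trF l) (nF l) k).1) f = 0 ->
  wsum (fun k => (quad_pow (trF l) (nF l) k).2) f = 0 ->
  cd_root mu gam (companion mu gam f) l.
Proof.
move=> hB hA; rewrite /cd_root cd_eval_quad !wsum_companion.
rewrite !big1 ?cd_mul0l ?addr0 // => i _.
- by rewrite (wsum_quad_shift i hB hA).2 cd_mul0r.
- by rewrite (wsum_quad_shift i hB hA).1 cd_mul0r.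
Qed.

Lemma charpoly_root_sphere n (l r : cdT F n) :
  sphere l r -> cd_root mu gam (charpoly_cd mu gam l) r.
Proof.
move=> [tr nr]; rewrite /cd_root /cd_eval /charpoly_cd /cd_norm /cd_tr /=.
rewrite ?cdE !cd_mulr1 cd_mul1r cd_mul_self tr nr (cd_mul_conj l).1 conj_trF.
rewrite [l + _]addrC subrK cd_mulNl cd_mulZl cd_mul1r.
by rewrite addr0 addKr subrr.
Qed.

End Algebra.

Theorem theorem3p13 (F : fieldType) (mu : F) (gam : nat -> F) (n : nat)
    (f : seq (cdT F n)) (lam : cdT F n) :
  4 * mu + 1 != 0 ->
  (forall k, (k < n)%N -> gam k != 0) ->
  spherical_root mu gam f lam ->
  cd_root mu gam (companion mu gam f) lam.
Proof.
move=> hmu hg [nl [root_lam sph]].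
set al := fun k => (quad_pow (trF lam) (nF mu gam lam) k).1.
set be := fun k => (quad_pow (trF lam) (nF mu gam lam) k).2.
have eval_sphere r : sphere mu gam lam r ->
    cd_eval mu gam f r = wsum al f + cd_mul mu gam (wsum be f) r.
  by case=> tr nr; rewrite cd_eval_quad tr nr.
have hA : wsum be f = 0.
  apply: (cd_sphere_lfaithful hmu hg nl) => r hr.
  apply: (addrI (wsum al f)); rewrite -eval_sphere // -eval_sphere //.
  by rewrite (sph r (charpoly_root_sphere hr)) root_lam.
have hB : wsum al f = 0.
  by have := root_lam; rewrite /cd_root eval_sphere // hA cd_mul0l addr0.
exact: cd_root_companion hB hA.
Qed.
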